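(* Let $\mathcal{A}$ be a Banach algebra such that $\mathcal{A}^*$ factors on the left, i.e. $\mathcal{A}^*=\{a'a: a'\in\mathcal{A}^*,a\in\mathcal{A}\}$. Then $a\cdot a''\in Z_1(\mathcal{A}^{**})$ for all $a\in\mathcal{A}$, $a''\in\mathcal{A}^{**}$ if and only if $\mathcal{A}$ is Arens regular.
   Context: For $a,b\in\mathcal{A}$, $a'\in\mathcal{A}^*$, $a'',b''\in\mathcal{A}^{**}$: $\langle a'a,b\rangle=\langle a',ab\rangle$, $\langle b''a',a\rangle=\langle b'',a'a\rangle$, and the first Arens product is $\langle a''\cdot b'',a'\rangle=\langle a'',b''a'\rangle$. The second Arens product is given by $\langle a\circ a',b\rangle=\langle a',ba\rangle$, $\langle a'\circ a'',a\rangle=\langle a'',a\circ a'\rangle$, $\langle a''\circ b'',a'\rangle=\langle b'',a'\circ a''\rangle$. $Z_1(\mathcal{A}^{**})=\{a''\in\mathcal{A}^{**}: b''\mapsto a''\cdot b''\text{ is weak}^*\text{-to-weak}^*\text{ continuous}\}$. $\mathcal{A}$ is Arens regular if the two Arens products coincide on $\mathcal{A}^{**}$ (equivalently $Z_1(\mathcal{A}^{**})=\mathcal{A}^{**}$). *)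

From HB Require Import structures.
From mathcomp Require Import all_boot all_order all_algebra.
From mathcomp Require Import all_classical all_reals all_analysis.
From mathcomp Require Import complex.
Import Order.TTheory GRing.Theory Num.Theory.
Import numFieldNormedType.Exports.
Local Open Scope ring_scope.
Local Open Scope classical_set_scope.

Set Implicit Arguments.
Unset Strict Implicit.
Unset Printing Implicit Defensive.

Section BanachAlgebra.
Variables (K : numFieldType) (A : normedModType K) (mul : A -> A -> A).

Definition banach_algebra_mul : Prop :=
  [/\ (forall (k : K) (a b c : A), mul (k *: a + b) c = k *: mul a c + mul b c),
      (forall (k : K) (a b c : A), mul a (k *: b + c) = k *: mul a b + mul a c),
      (forall a b c : A, mul a (mul b c) = mul (mul a b) c) &
      (forall a b : A, `|mul a b| <= `|a| * `|b|)].

Definition is_dual (f : A -> K) : Prop :=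
  (forall (k : K) (x y : A), f (k *: x + y) = k * f x + f y) /\
  (exists M : K, forall x : A, `|f x| <= M * `|x|).

(* A functional on A -> K is only
   relevant through its values on A^{*}; "bounded" is stated as
   |Phi f| <= M * ||f|| with ||f|| = inf {C | forall x, |f x| <= C |x|}. *)
Definition is_bidual (Phi : (A -> K) -> K) : Prop :=
  (forall (k : K) (f g : A -> K), is_dual f -> is_dual g ->
     Phi (fun x => k * f x + g x) = k * Phi f + Phi g) /\
  (exists M : K, forall (f : A -> K) (C : K), is_dual f ->
     (forall x : A, `|f x| <= C * `|x|) -> `|Phi f| <= M * C).

Definition hat (a : A) : (A -> K) -> K := fun f => f a.

(* <a' a, b> = <a', a b> *)
Definition dual_r (a' : A -> K) (a : A) : A -> K := fun b => a' (mul a b).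
(* <b'' a', a> = <b'', a' a> *)
Definition bidual_l (b'' : (A -> K) -> K) (a' : A -> K) : A -> K :=
  fun a => b'' (dual_r a' a).
(* <a'' . b'', a'> = <a'', b'' a'> *)
Definition arens1 (a'' b'' : (A -> K) -> K) : (A -> K) -> K :=
  fun a' => a'' (bidual_l b'' a').

(* <a o a', b> = <a', b a> *)
Definition dual_l (a : A) (a' : A -> K) : A -> K := fun b => a' (mul b a).
(* <a' o a'', a> = <a'', a o a'> *)
Definition bidual_r (a' : A -> K) (a'' : (A -> K) -> K) : A -> K :=
  fun a => a'' (dual_l a a').
(* <a'' o b'', a'> = <b'', a' o a''> *)
Definition arens2 (a'' b'' : (A -> K) -> K) : (A -> K) -> K :=
  fun a' => b'' (bidual_r a' a'').

Definition weakstar_cvg (F : set_system ((A -> K) -> K)) (Phi : (A -> K) -> K)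
  : Prop :=
  forall a' : A -> K, is_dual a' -> (fun x => x a') @ F --> Phi a'.

(* T : A^{**} -> A^{**} is weak-star-to-weak-star continuous (on the subspace A^{**}
   of (A -> K) -> K carrying the initial topology of the evaluations at
   elements of A^{*} ), characterized by filters. *)
Definition weakstar_continuous (T : ((A -> K) -> K) -> ((A -> K) -> K)) : Prop :=
  forall (F : set_system ((A -> K) -> K)) (Phi : (A -> K) -> K),
    Filter F -> F is_bidual -> is_bidual Phi ->
    weakstar_cvg F Phi -> weakstar_cvg (T @ F) (T Phi).

Definition in_Z1 (a'' : (A -> K) -> K) : Prop :=
  is_bidual a'' /\ weakstar_continuous (arens1 a'').

Definition dual_factors_left : Prop :=
  forall f : A -> K, is_dual f ->
    exists (a' : A -> K) (a : A), is_dual a' /\ f = dual_r a' a.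

Definition arens_regular : Prop :=
  forall a'' b'' : (A -> K) -> K, is_bidual a'' -> is_bidual b'' ->
    forall a' : A -> K, is_dual a' -> arens1 a'' b'' a' = arens2 a'' b'' a'.

End BanachAlgebra.

(* Since [a' a] ranges over all of A^{*}, associativity turns the Arens products
   of [a''] and [b''] at [a' a] into the Arens products of [a . a''] and [b''] at
   [a'], so regularity only has to be checked for left factors in Z_1(A^{**}).
   For [c] in Z_1(A^{**}) both [b'' |-> c . b''] and [b'' |-> c o b''] are
   weak-star continuous, and they agree on the canonical image of A; as that image
   is weak-star dense in A^{**} they agree everywhere.  Conversely, when A is Arens
   regular, [b'' |-> c . b''] equals [b'' |-> c o b''], which is weak-star
   continuous for every [c]. *)

From HB Require Import structures.
From mathcomp Require Import all_boot all_order all_algebra.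
From mathcomp Require Import all_classical all_reals all_analysis.
From mathcomp Require Import complex.
From mathcomp Require Import ring.
From Stdlib Require List.
Import Order.TTheory GRing.Theory Num.Theory.
Import numFieldNormedType.Exports.
Local Open Scope ring_scope.
Local Open Scope classical_set_scope.

Set Implicit Arguments.
Unset Strict Implicit.
Unset Printing Implicit Defensive.

Section Duals.
Variables (K : numFieldType) (A : normedModType K).

Lemma dual_bound_nonneg (f : A -> K) : is_dual f ->
  exists2 M : K, 0 <= M & forall x, `|f x| <= M * `|x|.
Proof.
move=> [_ [M HM]]; exists `|M| => // x.
have M_x_ge0 : 0 <= M * `|x| by apply: le_trans (HM x).
by rewrite -[`|x|]ger0_norm // -normrM ger0_norm.
Qed.

Lemma dual_zero : is_dual (fun _ : A => 0 : K).
Proof.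
split; first by move=> *; rewrite mulr0 addr0.
by exists 0 => x; rewrite normr0 mul0r.
Qed.

Lemma dual_combination (k : K) (f g : A -> K) : is_dual f -> is_dual g ->
  is_dual (fun x => k * f x + g x).
Proof.
move=> df dg; have [Mf Mf0 Hf] := dual_bound_nonneg df.
have [Mg Mg0 Hg] := dual_bound_nonneg dg.
case: df dg => [Lf _] [Lg _]; split; first by move=> c x y; rewrite Lf Lg; ring.
exists (`|k| * Mf + Mg) => x; apply: le_trans (ler_normD _ _) _.
by rewrite normrM mulrDl -mulrA lerD // ler_wpM2l.
Qed.

Definition linear_on_dual (P : (A -> K) -> K) : Prop :=
  forall (k : K) (f g : A -> K), is_dual f -> is_dual g ->
    P (fun x => k * f x + g x) = k * P f + P g.

Lemma linear_on_dual0 (P : (A -> K) -> K) : linear_on_dual P ->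
  P (fun _ => 0) = 0.
Proof.
move=> LP; have := LP 1 _ _ dual_zero dual_zero.
have -> : (fun _ : A => 1 * (0 : K) + 0) = (fun _ => 0).
  by apply: funext => x; rewrite mul1r addr0.
by rewrite mul1r => h; apply: (addrI (P (fun _ => 0))); rewrite addr0 -h.
Qed.

Lemma hat_bidual (a : A) : is_bidual (hat a).
Proof.
split; first by [].
by exists `|a| => f C _ HC; rewrite /hat mulrC; apply: HC.
Qed.

Definition common_kernel (gs : seq (A -> K)) : set A :=
  [set x | List.Forall (fun g => g x = 0) gs].

Lemma common_kernelD (gs : seq (A -> K)) (k : K) (y z : A) :
  List.Forall (@is_dual K A) gs ->
  common_kernel gs y -> common_kernel gs z -> common_kernel gs (k *: y + z).
Proof.
move=> /List.Forall_forall dgs /List.Forall_forall hy /List.Forall_forall hz.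
apply/List.Forall_forall => g g_in; have [Lg _] := dgs g g_in.
by rewrite Lg hy // hz // mulr0 addr0.
Qed.

(* A functional on A^{*} vanishing at [g_1, ..., g_n] vanishes at every [f]
   whose kernel contains the common kernel of the [g_i]: [f] is then a linear
   combination of the [g_i]. *)
Lemma linear_on_dual_kernel (gs : seq (A -> K)) (f : A -> K)
    (P : (A -> K) -> K) :
  List.Forall (@is_dual K A) gs -> is_dual f ->
  common_kernel gs `<=` [set x | f x = 0] ->
  linear_on_dual P -> List.Forall (fun g => P g = 0) gs -> P f = 0.
Proof.
elim: gs f => [|g hs IH] f /=.
  move=> _ _ f_ker LP _.
  have -> : f = (fun _ => 0) by apply: funext => y; apply: f_ker.
  exact: linear_on_dual0.
move=> /List.Forall_cons_iff [dg dhs] df f_ker LP /List.Forall_cons_iff [Pg Phs].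
have [[z [hz gz]]|ker_hs_g] :=
  pselect (exists z, common_kernel hs z /\ g z != 0); last first.
  apply: IH => // y hy; apply: f_ker; apply: List.Forall_cons => //.
  by apply: contra_notP ker_hs_g => gy; exists y; split => //; apply/eqP.
pose c := f z / g z.
have : P (fun x => - c * g x + f x) = 0.
  apply: IH => //; first exact: dual_combination.
  move=> y hy; pose y' := - (g y / g z) *: z + y.
  have gy' : g y' = 0.
    by case: dg => [Lg _]; rewrite Lg mulNr -mulrA mulVf // mulr1 addNr.
  have := f_ker y' (List.Forall_cons _ gy' (common_kernelD _ dhs hz hy)).
  case: df => [Lf _]; rewrite /= Lf /c => <-.
  by rewrite !mulNr; congr (- _ + _); ring.
by rewrite LP // Pg mulr0 add0r.
Qed.

(* Exact finite-dimensional interpolation: the canonical image of A meets every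
   basic weak-star neighbourhood of an element of A^{**}. *)
Lemma dual_interpolation (gs : seq (A -> K)) (P : (A -> K) -> K) :
  List.Forall (@is_dual K A) gs -> linear_on_dual P ->
  exists x, List.Forall (fun g => g x = P g) gs.
Proof.
move=> dgs LP; elim: gs dgs => [|f gs IH]; first by exists 0.
move=> /List.Forall_cons_iff [df dgs]; have [x0 Hx0] := IH dgs.
have [[y [hy fy]]|ker_gs_f] :=
  pselect (exists y, common_kernel gs y /\ f y != 0).
  exists (((P f - f x0) / f y) *: y + x0); apply: List.Forall_cons.
    by case: df => [Lf _]; rewrite Lf -mulrA mulVf // mulr1 subrK.
  move: dgs hy Hx0 => /List.Forall_forall dgs /List.Forall_forall hy.
  move=> /List.Forall_forall Hx0; apply/List.Forall_forall => g g_in.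
  by have [Lg _] := dgs g g_in; rewrite Lg (hy g) // (Hx0 g) // mulr0 add0r.
have : P f - f x0 = 0.
  apply: (linear_on_dual_kernel (P := fun h => P h - h x0) dgs df).
  - move=> y hy; apply: contra_notP ker_gs_f => fy.
    by exists y; split => //; apply/eqP.
  - by move=> k g h dg dh; rewrite LP //; ring.
  - by apply: List.Forall_impl Hx0 => g ->; rewrite subrr.
by move/eqP; rewrite subr_eq0 => /eqP fx0; exists x0; apply: List.Forall_cons.
Qed.

(* The trace on the canonical image of A of the weak-star neighbourhood filter of
   [b]; it is proper by [dual_interpolation]. *)
Definition hat_nbhs (b : (A -> K) -> K) : set_system ((A -> K) -> K) :=
  fun S => exists2 gs, List.Forall (@is_dual K A) gs &
    forall x, List.Forall (fun g => g x = b g) gs -> S (hat x).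

#[global] Instance hat_nbhs_filter (b : (A -> K) -> K) : Filter (hat_nbhs b).
Proof.
split; first by exists [::].
- move=> S1 S2 [g1 d1 H1] [g2 d2 H2]; exists (g1 ++ g2)%list.
    by apply/List.Forall_app.
  by move=> x /List.Forall_app [? ?]; split; [apply: H1 | apply: H2].
- by move=> S1 S2 sub [gs d H]; exists gs => // x /H /sub.
Qed.

Lemma hat_nbhs_proper (b : (A -> K) -> K) : is_bidual b ->
  ProperFilter (hat_nbhs b).
Proof.
move=> [Lb _]; split; last exact: hat_nbhs_filter.
by move=> [gs d H]; have [x hx] := dual_interpolation d Lb; apply: H hx.
Qed.

Lemma hat_nbhs_hat (b : (A -> K) -> K) (S : set ((A -> K) -> K)) :
  (forall x, S (hat x)) -> hat_nbhs b S.
Proof. by move=> HS; exists [::]. Qed.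

Lemma hat_nbhs_cvg (b : (A -> K) -> K) : weakstar_cvg (hat_nbhs b) b.
Proof.
move=> a' da'; apply: cvg_near_cst.
exists [:: a']; first exact: List.Forall_cons.
by move=> x /List.Forall_cons_iff [].
Qed.

End Duals.

Section ArensProducts.
Variables (K : numFieldType) (A : normedModType K) (mul : A -> A -> A).
Hypothesis mulP : banach_algebra_mul mul.

Local Notation dual := (@is_dual K A).
Local Notation bidual := (@is_bidual K A).

Lemma mul_scaleDl (k : K) (a b c : A) : mul (k *: a + b) c = k *: mul a c + mul b c.
Proof. by case: mulP. Qed.

Lemma mul_scaleDr (k : K) (a b c : A) : mul a (k *: b + c) = k *: mul a b + mul a c.
Proof. by case: mulP. Qed.

Lemma mul_assoc (a b c : A) : mul a (mul b c) = mul (mul a b) c.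
Proof. by case: mulP. Qed.

Lemma norm_mul_le (a b : A) : `|mul a b| <= `|a| * `|b|.
Proof. by case: mulP. Qed.

(* No sign condition on [C]: a negative [C] forces A to be trivial. *)
Lemma dual_r_bound (f : A -> K) (C : K) (a : A) :
  (forall x, `|f x| <= C * `|x|) ->
  forall x, `|dual_r mul f a x| <= C * `|a| * `|x|.
Proof.
move=> HC x; have [x0|x_neq0] := eqVneq `|x| 0.
  have ax0 : `|mul a x| = 0.
    apply/eqP; rewrite eq_le normr_ge0 andbT.
    by apply: le_trans (norm_mul_le _ _) _; rewrite x0 mulr0.
  by have := HC (mul a x); rewrite ax0 x0 !mulr0.
have x_gt0 : 0 < `|x| by rewrite lt_def x_neq0 normr_ge0.
have C_ge0 : 0 <= C by rewrite -(pmulr_lge0 _ x_gt0); apply: le_trans (HC x).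
by apply: le_trans (HC _) _; rewrite -mulrA ler_wpM2l // norm_mul_le.
Qed.

Lemma dual_r_dual (f : A -> K) (a : A) : dual f -> dual (dual_r mul f a).
Proof.
move=> df; have [M _ HM] := dual_bound_nonneg df; case: df => [Lf _]; split.
  by move=> k x y; rewrite /dual_r mul_scaleDr Lf.
by exists (M * `|a|); apply: dual_r_bound.
Qed.

Lemma dual_l_dual (f : A -> K) (a : A) : dual f -> dual (dual_l mul a f).
Proof.
move=> df; have [M M0 HM] := dual_bound_nonneg df; case: df => [Lf _]; split.
  by move=> k x y; rewrite /dual_l mul_scaleDl Lf.
exists (M * `|a|) => x; apply: le_trans (HM _) _.
by rewrite -mulrA ler_wpM2l // mulrC norm_mul_le.
Qed.

Lemma bidual_l_dual (b : (A -> K) -> K) (f : A -> K) :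
  bidual b -> dual f -> dual (bidual_l mul b f).
Proof.
move=> [Lb [Mb HMb]] df; have [M _ HM] := dual_bound_nonneg df; split.
  move=> k x y; rewrite /bidual_l -Lb; try exact: dual_r_dual.
  by congr b; apply: funext => c; rewrite /dual_r mul_scaleDl; case: df => [-> _].
exists (Mb * M) => x; rewrite -mulrA; apply: HMb; first exact: dual_r_dual.
exact: dual_r_bound.
Qed.

Lemma bidual_r_dual (f : A -> K) (c : (A -> K) -> K) :
  dual f -> bidual c -> dual (bidual_r mul f c).
Proof.
move=> df [Lc [Mc HMc]]; have [M M0 HM] := dual_bound_nonneg df; split.
  move=> k x y; rewrite /bidual_r -Lc; try exact: dual_l_dual.
  by congr c; apply: funext => b; rewrite /dual_l mul_scaleDr; case: df => [-> _].
exists (Mc * M) => x; rewrite -mulrA; apply: HMc; first exact: dual_l_dual.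
move=> b; apply: le_trans (HM _) _.
by rewrite -mulrA ler_wpM2l // mulrC norm_mul_le.
Qed.

Lemma arens1_bidual (a'' b'' : (A -> K) -> K) :
  bidual a'' -> bidual b'' -> bidual (arens1 mul a'' b'').
Proof.
move=> [La [Ma HMa]] bb; have [Lb [Mb HMb]] := bb; split.
  move=> k f g df dg; rewrite /arens1 -La; try exact: bidual_l_dual.
  congr a''; apply: funext => c; rewrite /bidual_l -Lb; try exact: dual_r_dual.
  by congr b''.
exists (Ma * Mb) => f C df HC; rewrite /arens1 -mulrA.
apply: HMa; first exact: bidual_l_dual.
move=> c; rewrite /bidual_l -mulrA; apply: HMb; first exact: dual_r_dual.
exact: dual_r_bound.
Qed.

Lemma arens1_hat (c : (A -> K) -> K) (x : A) :
  arens1 mul c (hat x) = arens2 mul c (hat x).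
Proof. by []. Qed.

Lemma arens2_weakstar_cvg (c : (A -> K) -> K) (f : A -> K)
    (F : set_system ((A -> K) -> K)) (Phi : (A -> K) -> K) :
  bidual c -> dual f -> weakstar_cvg F Phi ->
  (fun y => arens2 mul c y f) @ F --> arens2 mul c Phi f.
Proof. by move=> bc df; apply; apply: bidual_r_dual. Qed.

Lemma in_Z1_arens1E (c b : (A -> K) -> K) (f : A -> K) :
  in_Z1 mul c -> bidual b -> dual f -> arens1 mul c b f = arens2 mul c b f.
Proof.
move=> [bc c_cont] bb df; have F_proper := hat_nbhs_proper bb.
have F_bidual : hat_nbhs b bidual by apply: hat_nbhs_hat; apply: hat_bidual.
have cvg1 : (fun y => arens1 mul c y f) @ hat_nbhs b --> arens1 mul c b f.
  exact: c_cont _ _ (hat_nbhs_filter b) F_bidual bb (@hat_nbhs_cvg _ _ b) f df.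
have cvg2 := arens2_weakstar_cvg bc df (@hat_nbhs_cvg _ _ b).
have arens_eq : \forall y \near hat_nbhs b, arens2 mul c y f = arens1 mul c y f.
  by apply: hat_nbhs_hat => x; rewrite arens1_hat.
apply: (cvg_unique (@norm_hausdorff K K) cvg1).
exact: cvg_trans (near_eq_cvg arens_eq) cvg2.
Qed.

Lemma arens_regular_in_Z1 (c : (A -> K) -> K) :
  arens_regular mul -> bidual c -> in_Z1 mul c.
Proof.
move=> reg bc; split=> // F Phi FF F_bidual bPhi HF a' da'.
rewrite (reg c Phi bc bPhi a' da').
have arens_eq : \forall y \near F, arens2 mul c y a' = arens1 mul c y a'.
  by apply: filterS F_bidual => y b_y; rewrite (reg c y bc b_y a' da').
exact: cvg_trans (near_eq_cvg arens_eq) (arens2_weakstar_cvg bc da' HF).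
Qed.

Lemma arens1_dual_r (a'' b'' : (A -> K) -> K) (f : A -> K) (a : A) :
  arens1 mul a'' b'' (dual_r mul f a) = arens1 mul (arens1 mul (hat a) a'') b'' f.
Proof.
congr a''; apply: funext => x; congr b''.
by apply: funext => y; rewrite /dual_r mul_assoc.
Qed.

Lemma arens2_dual_r (a'' b'' : (A -> K) -> K) (f : A -> K) (a : A) :
  arens2 mul a'' b'' (dual_r mul f a) = arens2 mul (arens1 mul (hat a) a'') b'' f.
Proof.
congr b''; apply: funext => x; congr a''.
by apply: funext => y; rewrite /dual_l /dual_r mul_assoc.
Qed.

End ArensProducts.

Theorem corollary2p3 (R : realType) (A : completeNormedModType R[i])
  (mul : A -> A -> A) :
  banach_algebra_mul mul ->
  dual_factors_left mul ->
  ((forall (a : A) (a'' : (A -> R[i]) -> R[i]),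
      is_bidual a'' -> in_Z1 mul (arens1 mul (hat a) a''))
   <-> arens_regular mul).
Proof.
move=> mulP factors; split.
  move=> hatZ1 a'' b'' ba bb a' da'.
  have [f [a [df ->]]] := factors a' da'.
  rewrite arens1_dual_r // arens2_dual_r //.
  exact: in_Z1_arens1E (hatZ1 a a'' ba) bb df.
move=> reg a a'' ba; apply: arens_regular_in_Z1 => //.
exact: arens1_bidual (hat_bidual a) ba.
Qed.
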